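(* Let $n\ge2$ and $T=\alpha_0I+\alpha_1D+\cdots+\alpha_nD^n\in\mathcal L(\mathcal P_n)$ with $\alpha_0,\dots,\alpha_n\in\mathbb C$, $\alpha_0\ne0$. Then for every $\varepsilon>0$ there exists $C_T(\varepsilon)>0$ such that for every $f\in\mathcal P_n$ of degree at least $2$ with simple roots, $$\tau(f)>C_T(\varepsilon)\ \Longrightarrow\ d_F\Bigl(Z\bigl(S(\alpha_1/\alpha_0)f\bigr),Z(Tf)\Bigr)<\varepsilon.$$
   Context: $\mathcal P_n$ is the complex vector space of polynomials of degree at most $n$, $D$ differentiation, $I$ identity. For $\beta\in\mathbb C$, $S(\beta)$ is the shift $(S(\beta)f)(z)=f(\beta+z)$, so $Z(S(\beta)f)=\{-\beta\}+Z(f)$. $Z(f)$ denotes the roots of $f$ counted with multiplicity; $\deg Tf=\deg f$ for such $T$. For $f$ of degree $\ge2$ with at least two distinct roots, $\tau(f):=\min\{|w-v|:w\in Z(f),\ v\in Z(f')\setminus\{w\}\}$. For multisets $A=\{u_1,\dots,u_m\}$, $B=\{v_1,\dots,v_m\}$ in $\mathbb C$, $d_F(A,B)=\min_{\sigma}\max_k|u_k-v_{\sigma(k)}|$ over permutations $\sigma$ of $\{1,\dots,m\}$. *)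

(* Complex numbers are modelled by an arbitrary
   numClosedFieldType C (e.g. algC). *)
From HB Require Import structures.
From mathcomp Require Import all_boot all_order all_algebra.
From mathcomp Require Import perm.
Set Implicit Arguments. Unset Strict Implicit. Unset Printing Implicit Defensive.
Import Order.TTheory GRing.Theory Num.Theory.
Local Open Scope ring_scope.

(* Z(f): the roots of f listed with multiplicity (a seq r with
   f = lead_coef f *: \prod_(z <- r) ('X - z)).  Z 0 = [::]. *)
Definition Z (C : numClosedFieldType) (f : {poly C}) : seq C :=
  sval (closed_field_poly_normal f).

Definition Top (C : numClosedFieldType) (n : nat) (alpha : nat -> C)
  (f : {poly C}) : {poly C} :=
  \sum_(k < n.+1) alpha k *: f^`(k).

Definition shift (C : numClosedFieldType) (beta : C) (f : {poly C}) : {poly C} :=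
  f \Po ('X + beta%:P).

Definition seqmin (C : numClosedFieldType) (s : seq C) : C :=
  \big[Num.min/head 0 s]_(x <- s) x.

Definition tau (C : numClosedFieldType) (f : {poly C}) : C :=
  seqmin [seq `|w - v| | w <- Z f, v <- [seq v <- Z f^`() | v != w]].

Definition permdist (C : numClosedFieldType) (A B : seq C) (m : nat)
  (s : 'S_m) : C :=
  \big[Num.max/0]_(k < m) `|nth 0 A k - nth 0 B (s k)|.

Definition dF (C : numClosedFieldType) (A B : seq C) : C :=
  \big[Num.min/@permdist C A B (size A) 1%g]_(s : 'S_(size A))
    @permdist C A B (size A) s.

From HB Require Import structures.
From mathcomp Require Import all_boot all_order all_algebra.
From mathcomp Require Import perm ring.
Import Order.TTheory GRing.Theory Num.Theory.
Local Open Scope ring_scope.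
Set Implicit Arguments. Unset Strict Implicit.

(* Proof of Corollary 4.4.  Write b = alpha_1/alpha_0 and let w be a (simple)
   root of f, with d = f'(w) != 0.  If every critical point of f lies at
   distance >= 1/t from w, the Taylor coefficients of f' at w are at most
   |d| 2^n t^i (shift_coef_bound).  T commutes with translations and maps X to
   alpha_0 X + alpha_1, which vanishes at -b; hence both |Tf(w - b)| and
   |(Tf)'(w - b) - alpha_0 d| are O(|d| t) (Top_eval_approx).  A log-derivative
   estimate then yields a root of Tf within eps of w - b (Top_root_near), and
   the same Taylor bounds show that no other root of f lies within 2 eps of w
   (roots_apart).  For tau(f) above an explicit threshold C_T(eps) both
   conclusions hold at every root, so the roots of S(b) f are 2 eps-separated
   and each is eps-close to a root of Tf; as both root lists have deg f
   elements, a matching lemma (dF_lt_matching) gives d_F < eps. *)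

Section RealExtrema.
Variable C : numClosedFieldType.

(* C is only partially ordered: a minimum of real values lies below each of
   them. *)
Lemma real_bigmin_le (I : eqType) (r : seq I) (F : I -> C) (x0 : C) (i : I) :
  x0 \is Num.real -> {in r, forall j, F j \is Num.real} -> i \in r ->
  \big[Num.min/x0]_(j <- r) F j <= F i.
Proof.
move=> x0_real; elim: r => // j r IHr F_real; rewrite big_cons inE.
have Fj_real : F j \is Num.real by apply: F_real; rewrite inE eqxx.
have F_real_r : {in r, forall k, F k \is Num.real}.
  by move=> k kr; apply: F_real; rewrite inE kr orbT.
have rest_real : \big[Num.min/x0]_(k <- r) F k \is Num.real.
  by rewrite big_seq bigmin_real.
rewrite comparable_ge_min ?real_comparable // => /orP [/eqP ->|ir].
  by rewrite lexx.
by rewrite IHr ?orbT.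
Qed.

Lemma bigmaxr_lt (I : Type) (r : seq I) (F : I -> C) (x0 e : C) :
  x0 < e -> (forall i, F i < e) -> \big[Num.max/x0]_(i <- r) F i < e.
Proof.
by move=> x0_lt Fe; elim/big_ind: _ => // x y xe ye; rewrite /Order.max; case: ifP.
Qed.

End RealExtrema.

Lemma geometric_term_le (R : numDomainType) (M t y e : R) (j : nat) :
  0 <= M -> 0 <= t -> 0 <= y -> y <= e -> t * e <= 1 ->
  M * t ^+ j.+1 * y ^+ j.+2 <= M * y * (t * e).
Proof.
move=> M_ge0 t_ge0 y_ge0 y_le_e te_le1.
have ty_ge0 : 0 <= t * y by rewrite mulr_ge0.
have ty_le_te : t * y <= t * e by apply: ler_wpM2l.
have -> : M * t ^+ j.+1 * y ^+ j.+2 = (M * y) * (t * y) ^+ j.+1.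
  by rewrite exprMn (exprS y); ring.
apply: ler_wpM2l; first by rewrite mulr_ge0.
apply: le_trans (ty_le_te).
by rewrite -[leRHS]expr1 ler_wiXn2l // (le_trans ty_le_te).
Qed.

Section RootLists.
Variable C : numClosedFieldType.
Implicit Types (p f : {poly C}) (x w c : C).

Lemma Z_spec p : p = lead_coef p *: \prod_(z <- Z p) ('X - z%:P).
Proof. exact: svalP (closed_field_poly_normal p). Qed.

Lemma mem_Z p x : p != 0 -> (x \in Z p) = root p x.
Proof.
by move=> p_neq0; rewrite {2}(Z_spec p) rootZ ?lead_coef_eq0 // root_prod_XsubC.
Qed.

Lemma size_Z p : p != 0 -> size (Z p) = (size p).-1.
Proof.
move=> p_neq0.
by rewrite {2}(Z_spec p) size_scale ?lead_coef_eq0 // size_prod_XsubC.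
Qed.

Lemma deriv_simple_root f w : f != 0 -> uniq (Z f) -> w \in Z f -> f^`().[w] != 0.
Proof.
move=> f_neq0 Zf_uniq wZ; have f_fact := Z_spec f.
rewrite (perm_big _ (perm_to_rem wZ)) big_cons in f_fact.
rewrite f_fact derivZ derivM derivXsubC mul1r hornerZ hornerD hornerM hornerXsubC.
rewrite subrr mul0r addr0 mulf_eq0 lead_coef_eq0 negb_or f_neq0 /=.
by rewrite -/(root _ w) root_prod_XsubC mem_rem_uniqF.
Qed.

Lemma tau_le f w c : w \in Z f -> c \in Z f^`() -> c != w -> tau f <= `|w - c|.
Proof.
move=> wZ cZ' c_neq_w; rewrite /tau /seqmin.
set s := [seq _ | _ <- _, _ <- _].
have dist_in : `|w - c| \in s.
  by apply: (allpairs_f_dep (fun w v => `|w - v|) wZ); rewrite mem_filter c_neq_w cZ'.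
have s_real : {in s, forall x, x \is Num.real}.
  by move=> x /allpairsPdep [u [v [_ _ ->]]]; exact: normr_real.
apply: real_bigmin_le => //.
by case: s dist_in s_real => //= x s' _; apply; rewrite inE eqxx.
Qed.

Lemma crit_far_tau f w s :
  f != 0 -> uniq (Z f) -> w \in Z f -> 0 < s -> s < tau f ->
  forall c, c \in Z f^`() -> 1 <= s^-1 * `|w - c|.
Proof.
move=> f_neq0 Zf_uniq wZ s_gt0 tau_big c cZ'.
have slope := deriv_simple_root f_neq0 Zf_uniq wZ.
have deriv_neq0 : f^`() != 0 by apply: contraNneq slope => ->; rewrite horner0.
have c_neq_w : c != w by apply: contraTneq cZ' => ->; rewrite mem_Z.
rewrite -[leLHS](mulVf (lt0r_neq0 s_gt0)); apply: ler_wpM2l; first by rewrite invr_ge0 ltW.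
exact/ltW/(lt_le_trans tau_big)/tau_le.
Qed.

Lemma logderiv_prod_bound (s : seq C) x e :
  0 <= e -> (forall r, r \in s -> e <= `|x - r|) ->
  `|(\prod_(r <- s) ('X - r%:P))^`().[x]| * e <=
  (size s)%:R * `|(\prod_(r <- s) ('X - r%:P)).[x]|.
Proof.
move=> e_ge0; elim: s => [|r s IHs] far.
  by rewrite big_nil -polyC1 derivC horner0 normr0 !mul0r.
have far_r : e <= `|x - r| by apply: far; rewrite inE eqxx.
have {}IHs : `|(\prod_(r <- s) ('X - r%:P))^`().[x]| * e <=
    (size s)%:R * `|(\prod_(r <- s) ('X - r%:P)).[x]|.
  by apply: IHs => r' r's; apply: far; rewrite inE r's orbT.
rewrite big_cons derivM derivXsubC mul1r hornerD !hornerM hornerXsubC /=.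
apply: le_trans (ler_wpM2r e_ge0 (ler_normD _ _)) _.
rewrite !normrM mulrDl -natr1 mulrDl mul1r addrC.
apply: lerD; last by rewrite mulrC; apply: ler_wpM2r.
by rewrite -mulrA [leRHS]mulrCA; apply: ler_wpM2l.
Qed.

Lemma logderiv_bound p z e :
  p != 0 -> 0 <= e -> (forall s, s \in Z p -> e <= `|z - s|) ->
  `|p^`().[z]| * e <= (size p).-1%:R * `|p.[z]|.
Proof.
move=> p_neq0 e_ge0 far; rewrite -size_Z // {1 3}(Z_spec p) derivZ !hornerZ !normrM.
by rewrite -mulrA [leRHS]mulrCA; apply: ler_wpM2l => //; apply: logderiv_prod_bound.
Qed.

End RootLists.

Section Translation.
Variable C : numClosedFieldType.
Implicit Types (p f q : {poly C}) (x w b : C).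

Lemma shift_horner w p x : (shift w p).[x] = p.[x + w].
Proof. by rewrite /shift horner_comp hornerD hornerX hornerC. Qed.

Lemma shift_deriv w p : (shift w p)^`() = shift w p^`().
Proof. by rewrite /shift deriv_comp derivD derivX derivC addr0 mulr1. Qed.

Lemma shift_derivn w p k : (shift w p)^`(k) = shift w p^`(k).
Proof. by elim: k => [|k IHk]; rewrite ?derivn0 // !derivnS IHk shift_deriv. Qed.

Lemma size_shift w p : size (shift w p) = size p.
Proof. by rewrite /shift size_comp_poly2 // size_XaddC. Qed.

Lemma shift_eq0 w p : (shift w p == 0) = (p == 0).
Proof. by rewrite -!size_poly_eq0 size_shift. Qed.

Lemma mem_Z_shift b f x : f != 0 -> (x \in Z (shift b f)) = (x + b \in Z f).
Proof.
by move=> f_neq0; rewrite !mem_Z ?shift_eq0 // /root shift_horner.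
Qed.

Lemma uniq_Z_shift b f : f != 0 -> uniq (Z f) -> uniq (Z (shift b f)).
Proof.
move=> f_neq0 Zf_uniq; apply: (@leq_size_uniq _ [seq w - b | w <- Z f]).
- by rewrite map_inj_uniq // => x y /addIr.
- by move=> x /mapP [w wZ ->]; rewrite mem_Z_shift // subrK.
by rewrite size_map !size_Z ?shift_eq0 // size_shift.
Qed.

Lemma shift_prod_XsubC w (s : seq C) :
  (forall c, c \in s -> c != w) ->
  shift w (\prod_(c <- s) ('X - c%:P)) =
  (\prod_(c <- s) (w - c)) *: \prod_(c <- s) (1 + (w - c)^-1 *: 'X).
Proof.
rewrite /shift; elim: s => [|c s IHs] s_neq_w.
  by rewrite !big_nil scale1r -polyC1 comp_polyC.
rewrite !big_cons comp_polyM IHs; last first.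
  by move=> c' c's; apply: s_neq_w; rewrite inE c's orbT.
have wc_neq0 : w - c != 0 by rewrite subr_eq0 eq_sym s_neq_w // inE eqxx.
rewrite comp_polyB comp_polyX comp_polyC -scalerA scalerAr scalerAl; congr (_ * _).
rewrite scalerDr scalerA mulfV // scale1r alg_polyC polyCB.
by rewrite [RHS]addrC addrA.
Qed.

Lemma coef_prod_1addX_bound (s : seq C) (t : C) i :
  0 <= t -> (forall a, a \in s -> `|a| <= t) ->
  `|(\prod_(a <- s) (1 + a *: 'X))`_i| <= 2%:R ^+ size s * t ^+ i.
Proof.
move=> t_ge0; elim: s i => [|a s IHs] i small.
  rewrite big_nil coef1 expr0 mul1r; case: i => [|i] /=; first by rewrite normr1.
  by rewrite normr0 exprn_ge0.
have small_a : `|a| <= t by apply: small; rewrite inE eqxx.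
have {}IHs j : `|(\prod_(a <- s) (1 + a *: 'X))`_j| <= 2%:R ^+ size s * t ^+ j.
  by apply: IHs => a' a's; apply: small; rewrite inE a's orbT.
rewrite big_cons mulrDl mul1r -scalerAl coefD coefZ coefXM.
apply: le_trans (ler_normD _ _) _; rewrite /= exprS.
case: i => [|i] /=.
  rewrite mulr0 normr0 addr0 expr0 !mulr1; apply: le_trans (IHs 0%N) _.
  by rewrite expr0 mulr1; apply: ler_peMl; rewrite ?exprn_ge0 ?ler1n.
rewrite normrM -mulrA mulrDl mul1r; apply: lerD; first exact: IHs.
by rewrite exprS mulrCA; apply: ler_pM => //; exact: IHs.
Qed.

Lemma shift_coef_bound q w (t : C) (N : nat) :
  q != 0 -> 0 <= t -> (size (Z q) <= N)%N ->
  (forall c, c \in Z q -> 1 <= t * `|w - c|) ->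
  forall i, `|(shift w q)`_i| <= `|q.[w]| * 2 ^+ N * t ^+ i.
Proof.
move=> q_neq0 t_ge0 sizeZ far i.
have wc_gt0 c : c \in Z q -> 0 < `|w - c|.
  move=> cZ; rewrite lt_def normr_ge0 andbT; apply: contraTneq (far c cZ) => ->.
  by rewrite mulr0 ler10.
have inv_small c : c \in Z q -> `|(w - c)^-1| <= t.
  by move=> cZ; rewrite normfV -div1r ler_pdivrMr ?wc_gt0 //; apply: far.
have c_neq_w c : c \in Z q -> c != w.
  by move=> cZ; rewrite eq_sym -subr_eq0 -normr_gt0 wc_gt0.
have q_fact := Z_spec q.
have -> : q.[w] = lead_coef q * \prod_(c <- Z q) (w - c).
  rewrite {1}q_fact hornerZ horner_prod; congr (_ * _).
  by apply: eq_bigr => c _; rewrite hornerXsubC.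
rewrite [in shift w q]q_fact /shift comp_polyZ -/(shift w _) shift_prod_XsubC //.
rewrite !coefZ !normrM -!mulrA; do 2!apply: (ler_wpM2l (normr_ge0 _)).
rewrite -(big_map (fun c => (w - c)^-1) xpredT (fun a => 1 + a *: 'X)).
apply: le_trans (coef_prod_1addX_bound _ t_ge0 _) _.
  by move=> a /mapP [c cZ ->]; exact: inv_small.
rewrite size_map; apply: ler_wpM2r; first exact: exprn_ge0.
by apply: ler_weXn2l => //; rewrite ler1n.
Qed.

End Translation.

Section Operator.
Variables (C : numClosedFieldType) (n : nat) (a : nat -> C).
Implicit Types (p f : {poly C}) (w : C).

Fact Top_is_linear : linear (Top n a).
Proof.
move=> c p q; rewrite /Top scaler_sumr -big_split; apply: eq_bigr => k _ /=.
by rewrite derivnD derivnZ scalerDr !scalerA mulrC.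
Qed.

HB.instance Definition _ :=
  GRing.isLinear.Build C {poly C} {poly C} _ (Top n a) Top_is_linear.

Lemma Top_shift w f : Top n a (shift w f) = shift w (Top n a f).
Proof.
rewrite /Top {2}/shift raddf_sum; apply: eq_bigr => k _ /=.
by rewrite shift_derivn /shift linearZ.
Qed.

Lemma Top_deriv f : (Top n a f)^`() = Top n a f^`().
Proof.
rewrite /Top raddf_sum; apply: eq_bigr => k _.
by apply: (etrans (derivZ _ _)); rewrite -derivnS derivSn.
Qed.

Lemma size_derivn_lt f k : f != 0 -> (size f^`(k.+1) < size f)%N.
Proof.
move=> f_neq0; elim: k => [|k IHk]; first by rewrite derivn1 lt_size_deriv.
rewrite derivnS; have [->|fk_neq0] := eqVneq f^`(k.+1) 0.
  by rewrite raddf0 size_poly0 lt0n size_poly_eq0.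
exact: ltn_trans (lt_size_deriv fk_neq0) IHk.
Qed.

(* When alpha_0 != 0, T preserves degrees: Tf = alpha_0 f + lower order terms. *)
Lemma size_Top f : a 0%N != 0 -> size (Top n a f) = size f.
Proof.
move=> a0_neq0; have [->|f_neq0] := eqVneq f 0; first by rewrite linear0.
rewrite /Top big_ord_recl derivn0 size_polyDl size_scale //.
elim/big_ind: _ => //.
- by rewrite size_poly0 lt0n size_poly_eq0.
- move=> p q ltp ltq; apply: leq_ltn_trans (size_polyD _ _) _.
  by rewrite gtn_max ltp ltq.
by move=> k _; apply: leq_ltn_trans (size_scale_leq _ _) _; apply: size_derivn_lt.
Qed.

Lemma Top_eq0 f : a 0%N != 0 -> (Top n a f == 0) = (f == 0).
Proof. by move=> a0_neq0; rewrite -!size_poly_eq0 size_Top. Qed.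

Lemma Top1 : Top n a 1 = (a 0%N)%:P.
Proof.
rewrite /Top big_ord_recl big1 ?addr0 => [|k _]; first by rewrite derivn0 alg_polyC.
by rewrite -polyC1 derivnC /= scaler0.
Qed.

(* T maps X to alpha_0 X + alpha_1, which vanishes at -alpha_1/alpha_0. *)
Lemma TopX_root : (0 < n)%N -> a 0%N != 0 -> (Top n a 'X).[- (a 1%N / a 0%N)] = 0.
Proof.
case: n => // m _ a0_neq0; rewrite /Top !big_ord_recl big1 ?addr0 => [|k _]; last first.
  by rewrite derivn_poly0 ?scaler0 // size_polyX.
rewrite /= derivX hornerD !hornerZ hornerX hornerC mulr1.
by rewrite mulrN mulrCA mulfV // mulr1 addNr.
Qed.

Definition Top_const : C := \sum_(i < n.+1) `|(Top n a 'X^i).[- (a 1%N / a 0%N)]|.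

Lemma Top_const_ge0 : 0 <= Top_const.
Proof. exact: sumr_ge0. Qed.

(* Since T kills X at -alpha_1/alpha_0, (Tp)(-alpha_1/alpha_0) is alpha_0 p(0) up to
   an error controlled by the coefficients of p of order >= 2. *)
Lemma Top_eval_approx p M :
  (0 < n)%N -> a 0%N != 0 -> (size p <= n.+1)%N -> 0 <= M ->
  (forall i, (1 < i)%N -> `|p`_i| <= M) ->
  `|(Top n a p).[- (a 1%N / a 0%N)] - a 0%N * p`_0| <= M * Top_const.
Proof.
move=> n_gt0 a0_neq0 size_p M_ge0 coef_small.
set L := fun q => (Top n a q).[- (a 1%N / a 0%N)].
have p_expand : p = \sum_(i < n.+1) p`_i *: 'X^i.
  rewrite -poly_def; apply/polyP => i; rewrite coef_poly.
  by case: ltnP => // /(leq_trans size_p) /leq_sizeP ->.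
have -> : L p - a 0%N * p`_0 = \sum_(i < n) p`_i.+1 * L 'X^(i.+1).
  rewrite /L {1}p_expand linear_sum horner_sum big_ord_recl /= linearZ hornerZ.
  rewrite /= expr0 Top1 hornerC mulrC addrAC subrr add0r.
  by apply: eq_bigr => i _; rewrite linearZ hornerZ.
rewrite /Top_const big_ord_recl mulrDr mulr_sumr.
apply: le_trans (ler_norm_sum _ _ _) _; apply: ler_wpDl; first by rewrite mulr_ge0.
apply: ler_sum => -[[|i] i_lt] _ /=; rewrite normrM.
  by rewrite expr1 /L TopX_root // normr0 !mulr0.
by apply: ler_wpM2r => //; apply: coef_small.
Qed.

End Operator.

Section LocalEstimates.
Variables (C : numClosedFieldType) (n : nat) (a : nat -> C) (f : {poly C}) (w t : C).
Hypotheses (n_gt0 : (0 < n)%N) (a0_neq0 : a 0%N != 0).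
Hypotheses (f_neq0 : f != 0) (size_f : (size f <= n.+1)%N).
Hypotheses (root_fw : root f w) (slope_neq0 : f^`().[w] != 0).
Hypotheses (t_ge0 : 0 <= t) (t_le1 : t <= 1).
Hypothesis crit_far : forall c, c \in Z f^`() -> 1 <= t * `|w - c|.

Let b := a 1%N / a 0%N.
Let d := f^`().[w].
Let K := `|d| * 2 ^+ n.

Let K_ge0 : 0 <= K. Proof. by rewrite mulr_ge0 ?exprn_ge0. Qed.

Let expr_le_t i : (0 < i)%N -> t ^+ i <= t.
Proof. by move=> i_gt0; rewrite -[leRHS]expr1 ler_wiXn2l. Qed.

Lemma taylor_deriv_bound i : `|(shift w f^`())`_i| <= K * t ^+ i.
Proof.
have deriv_neq0 : f^`() != 0 by apply: contraNneq slope_neq0 => ->; rewrite horner0.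
apply: shift_coef_bound => //; rewrite size_Z //.
by apply: leq_trans (leq_pred _) _; rewrite -ltnS (leq_trans (lt_size_deriv f_neq0)).
Qed.

Lemma taylor_bound i : `|(shift w f)`_i.+1| <= K * t ^+ i.
Proof.
apply: le_trans (taylor_deriv_bound i); rewrite -shift_deriv coef_deriv normrMn.
by rewrite mulrS lerDl mulrn_wge0.
Qed.

Let shift_coef0 : (shift w f)`_0 = 0.
Proof. by rewrite -horner_coef0 shift_horner add0r; apply/rootP. Qed.

Let shift_coef1 : (shift w f)`_1 = d.
Proof.
have <- : (shift w f^`()).[0] = d by rewrite shift_horner add0r.
by rewrite horner_coef0 -shift_deriv coef_deriv.
Qed.

Lemma Top_value_small : `|(Top n a f).[w - b]| <= K * t * Top_const n a.
Proof.
rewrite [w - b]addrC -shift_horner -Top_shift -[X in `|X|]subr0.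
rewrite -(mulr0 (a 0%N)) -shift_coef0.
apply: Top_eval_approx => //; first by rewrite size_shift.
  by rewrite mulr_ge0.
case=> // i i_gt0; apply: le_trans (taylor_bound i) _.
by rewrite ler_wpM2l ?expr_le_t.
Qed.

Lemma Top_slope_approx :
  `|(Top n a f)^`().[w - b] - a 0%N * d| <= K * t * Top_const n a.
Proof.
have coef0 : (shift w f^`())`_0 = d by rewrite -horner_coef0 shift_horner add0r.
rewrite Top_deriv [w - b]addrC -shift_horner -Top_shift -coef0.
apply: Top_eval_approx => //.
- by rewrite size_shift ltnW // (leq_trans (lt_size_deriv f_neq0)).
- by rewrite mulr_ge0.
move=> i i_gt1; apply: le_trans (taylor_deriv_bound i) _.
by rewrite ler_wpM2l ?expr_le_t // ltnW.
Qed.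

(* If T is close enough to alpha_0 I (relative to t), Tf has a root within eps
   of w - alpha_1/alpha_0: otherwise the log-derivative of Tf at that point
   would be at most deg f / eps, whereas (Tf)'/(Tf) there is of order
   |alpha_0| / (2^n G_T t). *)
Lemma Top_root_near eps :
  0 < eps -> 2 ^+ n * Top_const n a * (n%:R + eps) * t < eps * `|a 0%N| ->
  exists2 s, s \in Z (Top n a f) & `|w - b - s| < eps.
Proof.
move=> eps_gt0 T_close; set P := Top n a f; set z := w - b.
have P_neq0 : P != 0 by rewrite Top_eq0.
have [/hasP [s sZ close]|/hasPn far] := boolP (has (fun s => `|z - s| < eps) (Z P)).
  by exists s.
exfalso; set M := K * t * Top_const n a.
have far_eps s : s \in Z P -> eps <= `|z - s|.
  by move=> /far; rewrite -real_leNgt ?normr_real // gtr0_real.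
have logderiv := logderiv_bound P_neq0 (ltW eps_gt0) far_eps.
have deg_P : (size P).-1%:R <= n%:R :> C.
  by rewrite ler_nat size_Top // -subn1 leq_subLR add1n.
have slope_lb : `|a 0%N| * `|d| <= `|P^`().[z]| + M.
  rewrite -normrM -[a 0%N * d](subrKC P^`().[z]) addrC.
  apply: le_trans (ler_normD _ _) _.
  by rewrite addrC lerD2l distrC Top_slope_approx.
have : `|d| * (eps * `|a 0%N|) <= `|d| * (2 ^+ n * Top_const n a * (n%:R + eps) * t).
  have -> : `|d| * (eps * `|a 0%N|) = `|a 0%N| * `|d| * eps by ring.
  have -> : `|d| * (2 ^+ n * Top_const n a * (n%:R + eps) * t) = M * n%:R + M * eps.
    by rewrite /M /K; ring.
  apply: le_trans (ler_wpM2r (ltW eps_gt0) slope_lb) _; rewrite mulrDl lerD //.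
  apply: le_trans logderiv _; rewrite mulrC; apply: ler_pM => //.
  exact: Top_value_small.
rewrite ler_pM2l ?normr_gt0 // => contra.
by have := lt_le_trans T_close contra; rewrite ltxx.
Qed.

(* If t r is small, no other root of f lies within distance r of w: near w,
   f behaves like its tangent f'(w) (z - w). *)
Lemma roots_apart r :
  0 <= r -> t * r <= 1 -> (n.+1)%:R * 2 ^+ n * (t * r) < 1 ->
  forall w', root f w' -> w' != w -> r <= `|w' - w|.
Proof.
move=> r_ge0 tr_le1 tr_small w' root_w' w'_neq_w; set u := w' - w.
have u_gt0 : 0 < `|u| by rewrite normr_gt0 subr_eq0.
rewrite real_leNgt ?ger0_real //; apply/negP => u_lt_r.
set F := shift w f; set R := F - d *: 'X.
have Ru : R.[u] = - (d * u).
  rewrite hornerD hornerN hornerZ hornerX shift_horner subrK.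
  by move/rootP: root_w' => ->; rewrite sub0r.
have size_R : (size R <= n.+1)%N.
  apply: leq_trans (size_polyD _ _) _; rewrite size_polyN geq_max size_shift size_f /=.
  by apply: leq_trans (size_scale_leq _ _) _; rewrite size_polyX.
have term_small (i : 'I_n.+1) : `|R`_i * u ^+ i| <= K * `|u| * (t * r).
  have bound_ge0 : 0 <= K * `|u| * (t * r) by rewrite !mulr_ge0 ?exprn_ge0.
  case: i => -[|[|j]] /= _; rewrite coefB coefZ coefX /=.
  - by rewrite shift_coef0 mulr0 subr0 mul0r normr0.
  - by rewrite shift_coef1 mulr1 subrr mul0r normr0.
  rewrite mulr0 subr0 normrM normrX.
  apply: le_trans (_ : K * t ^+ j.+1 * `|u| ^+ j.+2 <= _).
    by apply: ler_wpM2r; [exact: exprn_ge0 | exact: taylor_bound].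
  by apply: geometric_term_le => //; exact: ltW.
have : `|d| * `|u| <= (K * `|u| * (t * r)) *+ n.+1.
  rewrite -normrM -normrN -Ru (horner_coef_wide _ size_R).
  apply: le_trans (ler_norm_sum _ _ _) _.
  apply: le_trans (ler_sum _ (fun i _ => term_small i)) _.
  by rewrite sumr_const card_ord.
have -> : (K * `|u| * (t * r)) *+ n.+1 =
    `|d| * `|u| * ((n.+1)%:R * 2 ^+ n * (t * r)).
  by rewrite -mulr_natr /K; ring.
rewrite -[leLHS]mulr1 ler_pM2l ?mulr_gt0 // ?normr_gt0 // => contra.
by have := lt_le_trans tr_small contra; rewrite ltxx.
Qed.

End LocalEstimates.

Section Threshold.
Variables (C : numClosedFieldType) (n : nat) (a : nat -> C) (eps : C).
Hypotheses (a0_neq0 : a 0%N != 0) (eps_gt0 : 0 < eps).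

Definition threshold : C :=
  1 + 2 ^+ n * Top_const n a * (n%:R + eps) / (`|a 0%N| * eps)
    + (n.+1)%:R * 2 ^+ n * (2 * eps) + 2 * eps.

Lemma threshold_spec :
  [/\ 0 < threshold, threshold^-1 <= 1,
      2 ^+ n * Top_const n a * (n%:R + eps) * threshold^-1 < eps * `|a 0%N|,
      threshold^-1 * (2 * eps) <= 1 &
      (n.+1)%:R * 2 ^+ n * (threshold^-1 * (2 * eps)) < 1].
Proof.
set K1 := 2 ^+ n * Top_const n a * (n%:R + eps).
set Y := `|a 0%N| * eps; set K2 := (n.+1)%:R * 2 ^+ n * (2 * eps).
have Y_gt0 : 0 < Y by rewrite mulr_gt0 ?normr_gt0.
have K1_ge0 : 0 <= K1.
  by rewrite !mulr_ge0 ?exprn_ge0 ?Top_const_ge0 // addr_ge0 ?ler0n ?ltW.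
have K2_ge0 : 0 <= K2 by rewrite !mulr_ge0 ?ler0n ?exprn_ge0 ?ltW.
have eps2_ge0 : 0 <= 2 * eps by rewrite mulr_ge0 ?ltW.
have K1Y_ge0 : 0 <= K1 / Y := divr_ge0 K1_ge0 (ltW Y_gt0).
have CT_def : threshold = 1 + (K1 / Y + (K2 + 2 * eps)) by rewrite /threshold -!addrA.
have CT_ge1 : 1 <= threshold by rewrite CT_def lerDl !addr_ge0.
have CT_gt0 : 0 < threshold := lt_le_trans ltr01 CT_ge1.
have below K : 0 <= K -> 1 + K <= threshold -> K * threshold^-1 < 1.
  move=> K_ge0 K_le; rewrite ltr_pdivrMr // mul1r.
  by apply: lt_le_trans K_le; rewrite ltrDr ltr01.
split=> //; first by rewrite invf_le1.
- have K1_le : 1 + K1 / Y <= threshold by rewrite CT_def lerD2l lerDl addr_ge0.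
  move: (below _ K1Y_ge0 K1_le); rewrite mulrAC ltr_pdivrMr // mul1r.
  by rewrite [eps * _]mulrC.
- by rewrite mulrC ltW // below // CT_def lerD2l addrA lerDr addr_ge0.
have -> : (n.+1)%:R * 2 ^+ n * (threshold^-1 * (2 * eps)) = K2 * threshold^-1.
  by rewrite /K2; ring.
by rewrite below // CT_def lerD2l addrCA lerDl addr_ge0.
Qed.

End Threshold.

Section Matching.
Variable C : numClosedFieldType.

(* A matching criterion for d_F: if the points of A are 2 eps-separated and each
   lies within eps of some point of B (with #A = #B), then the nearest-point map
   is injective, hence a permutation, and witnesses d_F(A, B) < eps. *)
Lemma dF_lt_matching (A B : seq C) (eps : C) :
  0 < eps -> size B = size A -> uniq A ->
  {in A &, forall x y, x != y -> 2 * eps <= `|x - y|} ->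
  {in A, forall x, exists2 y, y \in B & `|x - y| < eps} ->
  dF A B < eps.
Proof.
move=> eps_gt0 size_B A_uniq A_sep B_near.
have near_index (k : 'I_(size A)) : exists i : 'I_(size A), `|A`_k - B`_i| < eps.
  have [y yB close] := B_near _ (mem_nth 0 (ltn_ord k)).
  have y_idx : (index y B < size A)%N by rewrite -size_B index_mem.
  by exists (Ordinal y_idx); rewrite /= nth_index.
pose match_of k := xchoose (near_index k).
have match_close (k : 'I_(size A)) : `|A`_k - B`_(match_of k)| < eps.
  exact: xchooseP (near_index k).
have match_inj : injective match_of.
  move=> k l same_match; apply/val_inj/eqP.
  rewrite -(nth_uniq 0 (ltn_ord k) (ltn_ord l) A_uniq); apply/negPn/negP => A_neq.
  have A_close : `|A`_k - A`_l| < 2 * eps.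
    apply: le_lt_trans (ler_distD B`_(match_of k) _ _) _.
    by rewrite mulr_natl mulr2n ltrD // same_match distrC.
  have := A_sep _ _ (mem_nth 0 (ltn_ord k)) (mem_nth 0 (ltn_ord l)) A_neq.
  by move/(lt_le_trans A_close); rewrite ltxx.
pose sigma := perm match_inj.
have permdist_real (s : 'S_(size A)) : permdist A B s \is Num.real.
  by rewrite /permdist big_seq_cond bigmax_real // => k _; exact: normr_real.
apply: le_lt_trans (real_bigmin_le _ _ (mem_index_enum sigma)) _ => //.
by rewrite /permdist; apply: bigmaxr_lt => // k; rewrite permE.
Qed.

End Matching.

Theorem corollary4p4 (C : numClosedFieldType) (n : nat) (alpha : nat -> C) :
  (2 <= n)%N -> alpha 0%N != 0 ->
  forall eps : C, 0 < eps ->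
  exists CT : C, 0 < CT /\
    forall f : {poly C},
      (2 < size f)%N -> (size f <= n.+1)%N -> uniq (Z f) ->
      CT < tau f ->
      dF (Z (shift (alpha 1%N / alpha 0%N) f)) (Z (Top n alpha f)) < eps.
Proof.
move=> n_ge2 a0_neq0 eps eps_gt0; have n_gt0 : (0 < n)%N := ltnW n_ge2.
have [CT_gt0 t_le1 T_close t_eps t_apart] := threshold_spec n a0_neq0 eps_gt0.
exists (threshold n alpha eps); split=> // f size_f_gt2 size_f Zf_uniq tau_big.
set b := alpha 1%N / alpha 0%N; set t := (threshold n alpha eps)^-1.
have t_ge0 : 0 <= t by rewrite invr_ge0 ltW.
have f_neq0 : f != 0 by rewrite -size_poly_eq0 -lt0n (ltn_trans _ size_f_gt2).
have Z_root w : w \in Z f -> root f w by rewrite mem_Z.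
have slope w : w \in Z f -> f^`().[w] != 0 by apply: deriv_simple_root.
have crit_far w : w \in Z f -> forall c, c \in Z f^`() -> 1 <= t * `|w - c|.
  by move=> wZ; apply: crit_far_tau.
apply: dF_lt_matching => //.
- by rewrite !size_Z ?shift_eq0 ?Top_eq0 // size_Top // size_shift.
- exact: uniq_Z_shift.
- move=> x y; rewrite !mem_Z_shift // => xZ yZ x_neq_y.
  have -> : x - y = (x + b) - (y + b) by ring.
  apply: (roots_apart n_gt0 f_neq0 size_f (Z_root _ yZ) (slope _ yZ) t_ge0
    (crit_far _ yZ)) => //.
  + by rewrite mulr_ge0 ?ltW.
  + exact: Z_root.
  by rewrite (can_eq (addrK b)).
move=> x; rewrite mem_Z_shift // => xZ.
have [s sZ close] := Top_root_near n_gt0 a0_neq0 f_neq0 size_f (Z_root _ xZ) (slope _ xZ)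
  t_ge0 t_le1 (crit_far _ xZ) eps_gt0 T_close.
by exists s; rewrite // addrK in close.
Qed.
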